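(* Let $\nu=(\nu_x,\nu_y,\nu_t)\in\mathbb{S}^{2n}$ with $\nu_t=0$, let $d\in\mathbb{R}$ and $\Pi^+_{\nu,d}=\{\xi\in\mathbb{R}^{2n+1}:\langle\xi,\nu\rangle>d\}$. Then for every $u\in C_0^\infty(\Pi^+_{\nu,d})$, \[ \int_{\Pi^+_{\nu,d}}|\nabla_{\mathbb{H}^n}u|^2\,d\xi\ge\frac14\int_{\Pi^+_{\nu,d}}\frac{|u|^2}{\operatorname{dist}(\xi,\partial\Pi^+_{\nu,d})^2}\,d\xi . \]
   Context: $\mathbb{H}^n$ is $\mathbb{R}^{2n+1}$ with points $\xi=(x,y,t)$, $x,y\in\mathbb{R}^n$, $t\in\mathbb{R}$; correspondingly $\nu=(\nu_x,\nu_y,\nu_t)$ with $\nu_x,\nu_y\in\mathbb{R}^n$, $\nu_t\in\mathbb{R}$. For $1\le i\le n$, $X_i=\partial_{x_i}+2y_i\partial_t$, $Y_i=\partial_{y_i}-2x_i\partial_t$; $\nabla_{\mathbb{H}^n}u=(X_1u,\dots,X_nu,Y_1u,\dots,Y_nu)$ and $|\nabla_{\mathbb{H}^n}u|^2=\sum_i(|X_iu|^2+|Y_iu|^2)$. $\langle\cdot,\cdot\rangle$ is the Euclidean inner product, $\mathbb{S}^{2n}$ the Euclidean unit sphere in $\mathbb{R}^{2n+1}$, $\operatorname{dist}$ the Euclidean distance. Functions are real-valued. *)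

(* classical reals. Points of R^m are encoded as functions
   nat -> R whose coordinates of index >= m vanish. *)
From Stdlib Require Import Reals Lra.
Open Scope R_scope.

Fixpoint fsum (k : nat) (f : nat -> R) : R :=
  match k with O => 0 | S k' => fsum k' f + f k' end.

Definition pt (m : nat) (p : nat -> R) : Prop := forall i, (m <= i)%nat -> p i = 0.

Definition upd (p : nat -> R) (i : nat) (v : R) : nat -> R :=
  fun j => if Nat.eqb j i then v else p j.

Definition inner (m : nat) (p q : nat -> R) : R := fsum m (fun i => p i * q i).

Definition eucl_dist (m : nat) (p q : nat -> R) : R :=
  sqrt (fsum m (fun i => (p i - q i) ^ 2)).

Definition cont (m : nat) (f : (nat -> R) -> R) : Prop :=
  forall p, pt m p -> forall eps, 0 < eps -> exists del, 0 < del /\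
    forall q, pt m q -> (forall i, (i < m)%nat -> Rabs (q i - p i) < del) ->
      Rabs (f q - f p) < eps.

Definition is_partial (m : nat) (f : (nat -> R) -> R) (i : nat)
  (df : (nat -> R) -> R) : Prop :=
  forall p, pt m p -> derivable_pt_lim (fun s => f (upd p i s)) (p i) (df p).

CoInductive smooth (m : nat) (f : (nat -> R) -> R) : Prop :=
  smooth_intro : cont m f ->
    (forall i, (i < m)%nat -> exists df, is_partial m f i df /\ smooth m df) ->
    smooth m f.

(* Riemann sums over the grid (Z/N)^m ∩ [-N,N]^m *)
Fixpoint gridsum (m N : nat) (g : (nat -> R) -> R) : R :=
  match m with
  | O => g (fun _ => 0)
  | S m' => fsum (2 * N * N + 1) (fun j =>
        gridsum m' N (fun p => g (upd p m' ((INR j - INR (N * N)) / INR N))))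
  end.

Definition riemann_sum (m N : nat) (g : (nat -> R) -> R) : R :=
  gridsum m N g / (INR N) ^ m.

(* I is the integral over R^m of g (g continuous, compactly supported) *)
Definition integral_is (m : nat) (g : (nat -> R) -> R) (I : R) : Prop :=
  Un_cv (fun N => riemann_sum m N g) I.

Definition is_inf (E : R -> Prop) (r : R) : Prop :=
  (forall x, E x -> r <= x) /\ (forall r', (forall x, E x -> r' <= x) -> r' <= r).

(* Heisenberg group H^n on R^(2n+1): x_i = index i, y_i = index n+i, t = index 2n *)
Definition Xfield (n : nat) (Du : nat -> (nat -> R) -> R) (i : nat) (p : nat -> R) : R :=
  Du i p + 2 * p (n + i)%nat * Du (2 * n)%nat p.
Definition Yfield (n : nat) (Du : nat -> (nat -> R) -> R) (i : nat) (p : nat -> R) : R :=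
  Du (n + i)%nat p - 2 * p i * Du (2 * n)%nat p.
Definition gradH2 (n : nat) (Du : nat -> (nat -> R) -> R) (p : nat -> R) : R :=
  fsum n (fun i => (Xfield n Du i p) ^ 2 + (Yfield n Du i p) ^ 2).

(* Write [S(xi) = <xi, nu> - d], which for [xi] in the half-space is at most the
   distance to its boundary, and [a = (nu_x, nu_y, 2 omega(nu, xi))] with
   [omega(nu, xi) = sum_i nu_{x_i} y_i - nu_{y_i} x_i].  Because [nu_t = 0],
   [a . grad u = sum_i nu_{x_i} X_i u + nu_{y_i} Y_i u], so Cauchy-Schwarz gives
   [(a . grad u)^2 <= |grad_H u|^2]; completing the square with [a . nu = 1] gives
   [(a . grad u)^2 >= a . grad G + u^2 / (4 S^2)] for [G = u^2 / (2 S)].  Finally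
   [a_k] does not depend on [xi_k], so [a . grad G] integrates to zero.  On the
   Riemann sums defining the integrals this is a discrete integration by parts:
   the grid is invariant under a shift by one mesh step, and the mean value
   theorem together with the uniform continuity of the compactly supported
   [d_k G] controls the error. *)

From Stdlib Require Import Reals Lra Lia Arith.
From Stdlib Require Import FunctionalExtensionality Classical ClassicalDescription.
Open Scope R_scope.

Lemma fsum_ext k f g : (forall i, (i < k)%nat -> f i = g i) -> fsum k f = fsum k g.
Proof.
  induction k as [|k IH]; intros H; simpl; auto.
  rewrite IH, H; auto; intros; apply H; lia.
Qed.

Lemma fsum_plus k f g : fsum k (fun i => f i + g i) = fsum k f + fsum k g.
Proof. induction k as [|k IH]; simpl; [lra|]. rewrite IH; lra. Qed.

Lemma fsum_scal k c f : fsum k (fun i => c * f i) = c * fsum k f.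
Proof. induction k as [|k IH]; simpl; [lra|]. rewrite IH; lra. Qed.

Lemma fsum_minus k f g : fsum k (fun i => f i - g i) = fsum k f - fsum k g.
Proof. induction k as [|k IH]; simpl; [lra|]. rewrite IH; lra. Qed.

Lemma fsum_le k f g : (forall i, (i < k)%nat -> f i <= g i) -> fsum k f <= fsum k g.
Proof.
  induction k as [|k IH]; intros H; simpl; [lra|].
  assert (f k <= g k) by (apply H; lia).
  assert (fsum k f <= fsum k g) by (apply IH; intros; apply H; lia). lra.
Qed.

Lemma fsum_ge0 k f : (forall i, (i < k)%nat -> 0 <= f i) -> 0 <= fsum k f.
Proof.
  intros H. apply Rle_trans with (fsum k (fun _ => 0)); [|now apply fsum_le].
  clear H; induction k as [|k IH]; simpl; lra.
Qed.

Lemma fsum_abs k f : Rabs (fsum k f) <= fsum k (fun i => Rabs (f i)).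
Proof.
  induction k as [|k IH]; simpl; [rewrite Rabs_R0; lra|].
  eapply Rle_trans; [apply Rabs_triang | lra].
Qed.

Lemma fsum_le_const k f c : (forall i, (i < k)%nat -> f i <= c) -> fsum k f <= INR k * c.
Proof.
  induction k as [|k IH]; intros H; simpl fsum; [simpl; lra|]. rewrite S_INR.
  assert (f k <= c) by (apply H; lia).
  assert (fsum k f <= INR k * c) by (apply IH; intros; apply H; lia). lra.
Qed.

Lemma fsum_term_le k f j :
  (forall i, (i < k)%nat -> 0 <= f i) -> (j < k)%nat -> f j <= fsum k f.
Proof.
  induction k as [|k IH]; intros H Hj; [lia|]. simpl.
  assert (0 <= f k) by (apply H; lia).
  destruct (Nat.eq_dec j k) as [->|Hjk].
  - assert (0 <= fsum k f) by (apply fsum_ge0; intros; apply H; lia). lra.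
  - assert (f j <= fsum k f) by (apply IH; [intros; apply H|]; lia). lra.
Qed.

Lemma fsum_add a b f : fsum (a + b) f = fsum a f + fsum b (fun i => f (a + i)%nat).
Proof.
  induction b as [|b IH]; simpl; [rewrite Nat.add_0_r; lra|].
  rewrite Nat.add_succ_r. simpl. rewrite IH; lra.
Qed.

Lemma fsum_succ_shift M F : fsum M (fun j => F (S j)) = fsum M F + F M - F O.
Proof. induction M as [|M IH]; simpl; [lra|]. rewrite IH; lra. Qed.

Lemma upd_same p i v : upd p i v i = v.
Proof. unfold upd. now rewrite Nat.eqb_refl. Qed.

Lemma upd_other p i v j : j <> i -> upd p i v j = p j.
Proof. intros H. unfold upd. destruct (Nat.eqb_spec j i); [lia | auto]. Qed.

Lemma upd_upd p i a b : upd (upd p i a) i b = upd p i b.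
Proof. apply functional_extensionality; intros j. unfold upd. now destruct (Nat.eqb j i). Qed.

Lemma upd_comm p i j a b : i <> j -> upd (upd p i a) j b = upd (upd p j b) i a.
Proof.
  intros H. apply functional_extensionality; intros k. unfold upd.
  destruct (Nat.eqb_spec k j), (Nat.eqb_spec k i); auto; lia.
Qed.

Lemma upd_id p i : upd p i (p i) = p.
Proof.
  apply functional_extensionality; intros j. unfold upd.
  destruct (Nat.eqb_spec j i); now subst.
Qed.

Lemma pt_upd m p i v : pt m p -> (i < m)%nat -> pt m (upd p i v).
Proof. intros H Hi j Hj. rewrite upd_other by lia. auto. Qed.

Lemma pt_upd_last m p v : pt m p -> pt (S m) (upd p m v).
Proof. intros H j Hj. rewrite upd_other by lia. apply H; lia. Qed.

Lemma pt_zero : pt 0 (fun _ => 0).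
Proof. now intros i _. Qed.

Lemma inner_upd m p v k y :
  (k < m)%nat -> inner m (upd p k y) v = inner m p v + (y - p k) * v k.
Proof.
  unfold inner. induction m as [|m IH]; intros Hk; [lia|]. simpl.
  destruct (Nat.eq_dec k m) as [->|Hkm].
  - rewrite upd_same, (fsum_ext m _ (fun i => p i * v i)); [lra|].
    intros; now rewrite upd_other by lia.
  - rewrite IH, upd_other by lia. lra.
Qed.

Definition close (m : nat) (del : R) (p q : nat -> R) : Prop :=
  forall i, (i < m)%nat -> Rabs (q i - p i) < del.

Definition in_box (m : nat) (L : R) (p : nat -> R) : Prop :=
  forall i, (i < m)%nat -> Rabs (p i) <= L.

Lemma Rabs_le_between x a : Rabs x <= a -> - a <= x <= a.
Proof. unfold Rabs; destruct Rcase_abs; lra. Qed.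

Definition grid_point (N j : nat) : R := (INR j - INR (N * N)) / INR N.

Lemma gridsum_S m N g :
  gridsum (S m) N g =
  fsum (2 * N * N + 1) (fun j => gridsum m N (fun p => g (upd p m (grid_point N j)))).
Proof. reflexivity. Qed.

Lemma gridsum_ext m N g h : (forall p, pt m p -> g p = h p) -> gridsum m N g = gridsum m N h.
Proof.
  revert g h; induction m as [|m IH]; intros g h H; [apply H, pt_zero|].
  rewrite !gridsum_S. apply fsum_ext; intros j _. apply IH.
  intros p Hp. apply H, pt_upd_last, Hp.
Qed.

Lemma gridsum_plus m N g h :
  gridsum m N (fun p => g p + h p) = gridsum m N g + gridsum m N h.
Proof.
  revert g h; induction m as [|m IH]; intros g h; [reflexivity|].
  rewrite !gridsum_S, <- fsum_plus. apply fsum_ext; intros j _. apply IH.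
Qed.

Lemma gridsum_scal m N c g : gridsum m N (fun p => c * g p) = c * gridsum m N g.
Proof.
  revert g; induction m as [|m IH]; intros g; [reflexivity|].
  rewrite !gridsum_S, <- fsum_scal. apply fsum_ext; intros j _. apply IH.
Qed.

Lemma gridsum_minus m N g h :
  gridsum m N (fun p => g p - h p) = gridsum m N g - gridsum m N h.
Proof.
  replace (gridsum m N g - gridsum m N h) with (gridsum m N g + -1 * gridsum m N h) by ring.
  rewrite <- gridsum_scal, <- gridsum_plus. apply gridsum_ext; intros; ring.
Qed.

Lemma gridsum_zero m N g : (forall p, pt m p -> g p = 0) -> gridsum m N g = 0.
Proof.
  intros H. rewrite (gridsum_ext m N g (fun p => 0 * 0)), gridsum_scal; [ring|].
  intros p Hp. rewrite H; auto; ring.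
Qed.

Lemma gridsum_le m N g h : (forall p, pt m p -> g p <= h p) -> gridsum m N g <= gridsum m N h.
Proof.
  revert g h; induction m as [|m IH]; intros g h H; [apply H, pt_zero|].
  rewrite !gridsum_S. apply fsum_le; intros j _. apply IH.
  intros p Hp. apply H, pt_upd_last, Hp.
Qed.

Lemma gridsum_fsum m N K f :
  gridsum m N (fun p => fsum K (fun k => f k p)) = fsum K (fun k => gridsum m N (f k)).
Proof.
  induction K as [|K IH]; simpl; [now apply gridsum_zero|].
  now rewrite gridsum_plus, IH.
Qed.

Section GridPoints.
Variable N : nat.
Hypothesis HN : (0 < N)%nat.

Let INR_N_pos : 0 < INR N.
Proof. now apply lt_0_INR. Qed.

Lemma grid_point_succ j : grid_point N j + / INR N = grid_point N (S j).
Proof. unfold grid_point. rewrite S_INR. field. lra. Qed.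

Lemma grid_point_first : grid_point N 0 = - INR N.
Proof. unfold grid_point. rewrite mult_INR. simpl. field. lra. Qed.

Lemma grid_point_last : grid_point N (2 * N * N + 1) = INR N + / INR N.
Proof. unfold grid_point. rewrite plus_INR, !mult_INR. simpl. field. lra. Qed.

(* Shifting by one mesh step along a coordinate only trades the first grid
   value [-N] for the value [N + 1/N], and [g] vanishes at both. *)
Lemma gridsum_shift_invariant m K g k :
  K < INR N -> (k < m)%nat -> (forall p, pt m p -> K < Rabs (p k) -> g p = 0) ->
  gridsum m N (fun p => g (upd p k (p k + / INR N))) = gridsum m N g.
Proof.
  intros HK. revert g k; induction m as [|m IH]; intros g k Hk Hg; [lia|].
  rewrite !gridsum_S. destruct (Nat.eq_dec k m) as [->|Hkm].
  - set (F := fun j => gridsum m N (fun p => g (upd p m (grid_point N j)))).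
    transitivity (fsum (2 * N * N + 1) (fun j => F (S j))).
    + apply fsum_ext; intros j _. apply gridsum_ext; intros p Hp.
      now rewrite upd_same, upd_upd, grid_point_succ.
    + assert (Hinv : 0 < / INR N) by (apply Rinv_0_lt_compat; lra).
      assert (F O = 0 /\ F (2 * N * N + 1)%nat = 0) as [F0 FM].
      { split; apply gridsum_zero; intros p Hp; apply Hg; try apply pt_upd_last; auto;
          rewrite upd_same.
        - rewrite grid_point_first, Rabs_Ropp, Rabs_right; lra.
        - rewrite grid_point_last, Rabs_right; lra. }
      rewrite fsum_succ_shift, F0, FM. ring.
  - apply fsum_ext; intros j _.
    rewrite <- (IH (fun p => g (upd p m (grid_point N j))) k) by
      (lia || (intros p Hp Hpk; apply Hg; [now apply pt_upd_last | now rewrite upd_other by lia])).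
    apply gridsum_ext; intros p Hp. now rewrite upd_other, upd_comm by lia.
Qed.

Definition grid_indicator (L : R) (j : nat) : R :=
  if Rle_dec (Rabs (grid_point N j)) L then 1 else 0.

Definition grid_count (L : R) : R := fsum (2 * N * N + 1) (grid_indicator L).

Lemma grid_count_ge0 L : 0 <= grid_count L.
Proof. apply fsum_ge0; intros. unfold grid_indicator. destruct Rle_dec; lra. Qed.

Lemma fsum_indicator_le a b M f :
  (forall j, f j = 0 \/ (f j = 1 /\ a <= INR j <= b)) ->
  fsum M f <= Rmax 0 (Rmin (INR M) (b + 1) - a).
Proof.
  intros H. induction M as [|M IH]; simpl fsum.
  - simpl. unfold Rmax, Rmin; repeat destruct Rle_dec; lra.
  - rewrite S_INR. destruct (H M) as [E|[E Eab]]; rewrite E;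
      revert IH; unfold Rmax, Rmin; repeat destruct Rle_dec; lra.
Qed.

(* The grid values in [-L, L] are the [j] with [|j - N^2| <= L N]. *)
Lemma grid_count_le L : 0 <= L -> grid_count L <= 2 * L * INR N + 1.
Proof.
  intros HL. unfold grid_count.
  eapply Rle_trans.
  - apply (fsum_indicator_le (INR (N * N) - L * INR N) (INR (N * N) + L * INR N)).
    intros j. unfold grid_indicator. destruct Rle_dec as [r|r]; [right | left]; auto.
    split; auto. unfold grid_point in r. apply Rabs_le_between in r.
    assert (E : (INR j - INR (N * N)) / INR N * INR N = INR j - INR (N * N)) by (field; lra).
    destruct r as [r1 r2]. split; nra.
  - unfold Rmax, Rmin; repeat destruct Rle_dec; nra.
Qed.

Lemma gridsum_support_bound m L g Bd :
  0 <= Bd -> (forall p, pt m p -> Rabs (g p) <= Bd) ->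
  (forall p, pt m p -> g p <> 0 -> in_box m L p) ->
  Rabs (gridsum m N g) <= Bd * grid_count L ^ m.
Proof.
  revert g Bd; induction m as [|m IH]; intros g Bd HB Hb Hs.
  { simpl. rewrite Rmult_1_r. apply Hb, pt_zero. }
  assert (Hs' : forall j p, pt m p -> g (upd p m (grid_point N j)) <> 0 -> in_box m L p).
  { intros j p Hp Hne i Hi. specialize (Hs _ (pt_upd_last _ _ _ Hp) Hne i ltac:(lia)).
    now rewrite upd_other in Hs by lia. }
  rewrite gridsum_S. eapply Rle_trans; [apply fsum_abs|].
  replace (Bd * grid_count L ^ S m)
    with (fsum (2 * N * N + 1) (fun j => Bd * grid_count L ^ m * grid_indicator L j))
    by (rewrite fsum_scal; unfold grid_count; simpl; ring).
  apply fsum_le; intros j _. unfold grid_indicator. destruct Rle_dec as [r|r].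
  - rewrite Rmult_1_r. apply IH; [auto | | exact (Hs' j)].
    intros p Hp. apply Hb, pt_upd_last, Hp.
  - rewrite Rmult_0_r, <- (Rmult_0_l (grid_count L ^ m)). apply IH; [lra | | exact (Hs' j)].
    intros p Hp. destruct (Req_dec (g (upd p m (grid_point N j))) 0) as [E|E].
    + rewrite E, Rabs_R0; lra.
    + exfalso. apply r. specialize (Hs _ (pt_upd_last _ _ _ Hp) E m ltac:(lia)).
      now rewrite upd_same in Hs.
Qed.

Lemma riemann_sum_support_bound m L g Bd :
  0 <= L -> 0 <= Bd -> (forall p, pt m p -> Rabs (g p) <= Bd) ->
  (forall p, pt m p -> g p <> 0 -> in_box m L p) ->
  Rabs (riemann_sum m N g) <= Bd * (2 * L + 1) ^ m.
Proof.
  intros HL HB Hb Hs. assert (1 <= INR N) by (apply (le_INR 1); lia).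
  unfold riemann_sum, Rdiv. rewrite Rabs_mult, Rabs_inv, (Rabs_right (INR N ^ m))
    by (apply Rle_ge, pow_le; lra).
  eapply Rle_trans.
  { apply Rmult_le_compat_r; [left; apply Rinv_0_lt_compat, pow_lt; lra|].
    apply (gridsum_support_bound m L g Bd); auto. }
  rewrite Rmult_assoc, <- pow_inv, <- Rpow_mult_distr. apply Rmult_le_compat_l; auto.
  apply pow_incr. split.
  - apply Rmult_le_pos; [apply grid_count_ge0 | left; apply Rinv_0_lt_compat; lra].
  - apply (Rmult_le_reg_r (INR N)); [lra|]. rewrite Rmult_assoc, Rinv_l, Rmult_1_r by lra.
    generalize (grid_count_le L HL). nra.
Qed.

End GridPoints.

Lemma riemann_sum_plus m N g h :
  riemann_sum m N (fun p => g p + h p) = riemann_sum m N g + riemann_sum m N h.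
Proof. unfold riemann_sum. rewrite gridsum_plus. unfold Rdiv. ring. Qed.

Lemma riemann_sum_scal m N c g : riemann_sum m N (fun p => c * g p) = c * riemann_sum m N g.
Proof. unfold riemann_sum. rewrite gridsum_scal. unfold Rdiv. ring. Qed.

Lemma riemann_sum_fsum m N K f :
  riemann_sum m N (fun p => fsum K (fun k => f k p)) = fsum K (fun k => riemann_sum m N (f k)).
Proof.
  unfold riemann_sum. rewrite gridsum_fsum, Rdiv_def, Rmult_comm, <- fsum_scal.
  apply fsum_ext; intros. unfold Rdiv. ring.
Qed.

Lemma riemann_sum_le m N g h :
  (0 < N)%nat -> (forall p, pt m p -> g p <= h p) -> riemann_sum m N g <= riemann_sum m N h.
Proof.
  intros HN H. unfold riemann_sum, Rdiv. apply Rmult_le_compat_r; [|now apply gridsum_le].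
  left. apply Rinv_0_lt_compat, pow_lt, lt_0_INR, HN.
Qed.

Definition near (m : nat) (p : nat -> R) (P : (nat -> R) -> Prop) : Prop :=
  exists del, 0 < del /\ forall q, pt m q -> close m del p q -> P q.

Definition cont_at (m : nat) (f : (nat -> R) -> R) (p : nat -> R) : Prop :=
  forall eps, 0 < eps -> near m p (fun q => Rabs (f q - f p) < eps).

Lemma near_and m p P Q : near m p P -> near m p Q -> near m p (fun q => P q /\ Q q).
Proof.
  intros [d1 [H1 P1]] [d2 [H2 P2]]. exists (Rmin d1 d2). split; [now apply Rmin_glb_lt|].
  intros q Hq Hd. split; [apply P1 | apply P2]; auto; intros i Hi; specialize (Hd i Hi).
  - generalize (Rmin_l d1 d2); lra.
  - generalize (Rmin_r d1 d2); lra.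
Qed.

Lemma near_impl m p (P Q : (nat -> R) -> Prop) :
  (forall q, pt m q -> P q -> Q q) -> near m p P -> near m p Q.
Proof. intros H [d [Hd P1]]. exists d; split; auto. Qed.

Lemma cont_at_ext m f g p :
  pt m p -> (forall q, pt m q -> f q = g q) -> cont_at m f p -> cont_at m g p.
Proof.
  intros Hp H Hc eps He. apply (near_impl m p (fun q => Rabs (f q - f p) < eps)); [|now apply Hc].
  intros q Hq. now rewrite !H.
Qed.

Lemma cont_at_const m c p : cont_at m (fun _ => c) p.
Proof. intros eps He. exists 1. split; [lra|]. intros. now rewrite Rminus_diag, Rabs_R0. Qed.

Lemma cont_at_plus m f g p : cont_at m f p -> cont_at m g p -> cont_at m (fun q => f q + g q) p.
Proof.
  intros Hf Hg eps He.
  eapply near_impl; [|apply near_and; [apply (Hf (eps / 2)) | apply (Hg (eps / 2))]; lra].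
  intros q _ [A B]. replace (f q + g q - (f p + g p)) with ((f q - f p) + (g q - g p)) by ring.
  eapply Rle_lt_trans; [apply Rabs_triang | lra].
Qed.

Lemma cont_at_comp m f phi p :
  cont_at m f p -> continuity_pt phi (f p) -> cont_at m (fun q => phi (f q)) p.
Proof.
  intros Hf Hphi eps He. destruct (Hphi eps He) as [alp [Ha H]].
  eapply near_impl; [|apply (Hf alp Ha)]. intros q _ Hq.
  destruct (Req_dec (f q) (f p)) as [E|E]; [now rewrite E, Rminus_diag, Rabs_R0|].
  apply (H (f q)). repeat split; auto.
Qed.

Lemma continuity_pt_scal c y : continuity_pt (fun x => c * x) y.
Proof.
  apply derivable_continuous_pt, (derivable_pt_scal id c), derivable_pt_id.
Qed.

Lemma continuity_pt_square y : continuity_pt (fun x => x * x) y.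
Proof.
  apply derivable_continuous_pt, (derivable_pt_mult id id); apply derivable_pt_id.
Qed.

Lemma cont_at_minus m f g p : cont_at m f p -> cont_at m g p -> cont_at m (fun q => f q - g q) p.
Proof.
  intros Hf Hg.
  replace (fun q => f q - g q) with (fun q => f q + -1 * g q)
    by (apply functional_extensionality; intros; ring).
  apply cont_at_plus, cont_at_comp; auto. apply continuity_pt_scal.
Qed.

(* Polarization reduces products to squares. *)
Lemma cont_at_mult m f g p : cont_at m f p -> cont_at m g p -> cont_at m (fun q => f q * g q) p.
Proof.
  intros Hf Hg.
  replace (fun q => f q * g q)
    with (fun q => / 4 * ((f q + g q) * (f q + g q) - (f q - g q) * (f q - g q)))
    by (apply functional_extensionality; intros; field).
  apply (cont_at_comp m _ (fun x => / 4 * x)); [|apply continuity_pt_scal].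
  apply cont_at_minus; apply (cont_at_comp m _ (fun x => x * x));
    try apply continuity_pt_square; [apply cont_at_plus | apply cont_at_minus]; auto.
Qed.

Lemma cont_at_inv m f p : f p <> 0 -> cont_at m f p -> cont_at m (fun q => / f q) p.
Proof.
  intros Hne Hf. apply (cont_at_comp m f (fun x => / x)); auto.
  apply (continuity_pt_inv id); auto. apply derivable_continuous_pt, derivable_pt_id.
Qed.

Lemma near_sum_abs_lt m p eps :
  0 < eps -> near m p (fun q => fsum m (fun i => Rabs (q i - p i)) < eps).
Proof.
  intros He. assert (0 <= INR m) by apply pos_INR.
  exists (eps / (INR m + 1)). split; [apply Rdiv_lt_0_compat; lra|].
  intros q _ Hd. eapply Rle_lt_trans; [apply fsum_le_const; intros i Hi; left; apply Hd, Hi|].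
  apply (Rmult_lt_reg_r (INR m + 1)); [lra|].
  replace (INR m * (eps / (INR m + 1)) * (INR m + 1)) with (INR m * eps) by (field; lra). nra.
Qed.

(** * Uniform continuity of compactly supported functions *)

Section UniformContinuity.
Variables (m : nat) (f : (nat -> R) -> R) (eps : R).

Definition cell : Type := ((nat -> R) * (nat -> R))%type.

Definition in_cell (B : cell) (p : nat -> R) : Prop :=
  forall i, (i < m)%nat -> fst B i <= p i <= snd B i.

Definition width (B : cell) (i : nat) : R := snd B i - fst B i.

Definition unif_cont_on (B : cell) : Prop :=
  exists del, 0 < del /\ forall p q, pt m p -> pt m q -> in_cell B p -> close m del p q ->
    Rabs (f q - f p) < eps.

Definition midpoint (B : cell) (k : nat) : R := (fst B k + snd B k) / 2.
Definition lower_half (B : cell) (k : nat) : cell := (fst B, upd (snd B) k (midpoint B k)).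
Definition upper_half (B : cell) (k : nat) : cell := (upd (fst B) k (midpoint B k), snd B).

Lemma unif_cont_on_halves B k :
  unif_cont_on (lower_half B k) -> unif_cont_on (upper_half B k) -> unif_cont_on B.
Proof.
  intros [d1 [H1 G1]] [d2 [H2 G2]]. exists (Rmin d1 d2). split; [now apply Rmin_glb_lt|].
  intros p q Hp Hq Hb Hd.
  destruct (Rle_dec (p k) (midpoint B k)) as [Hk|Hk]; [apply G1 | apply G2]; auto.
  - intros i Hi. simpl. destruct (Nat.eq_dec i k) as [->|Hik].
    + rewrite upd_same. specialize (Hb k Hi). lra.
    + rewrite upd_other by auto. auto.
  - intros i Hi. specialize (Hd i Hi). generalize (Rmin_l d1 d2); lra.
  - intros i Hi. simpl. destruct (Nat.eq_dec i k) as [->|Hik].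
    + rewrite upd_same. specialize (Hb k Hi). lra.
    + rewrite upd_other by auto. auto.
  - intros i Hi. specialize (Hd i Hi). generalize (Rmin_r d1 d2); lra.
Qed.

(* The half of [B] on which [f] is not uniformly [eps]-continuous, if [B] is such a cell. *)
Definition bad_half (k : nat) (B : cell) : cell :=
  if excluded_middle_informative (unif_cont_on (lower_half B k))
  then upper_half B k else lower_half B k.

Lemma bad_half_bad k B : ~ unif_cont_on B -> ~ unif_cont_on (bad_half k B).
Proof.
  unfold bad_half. destruct excluded_middle_informative; auto.
  intros H G. apply H, (unif_cont_on_halves B k); auto.
Qed.

Lemma bad_half_spec k B i : 0 <= width B i ->
  fst B i <= fst (bad_half k B) i /\ snd (bad_half k B) i <= snd B i /\
  width (bad_half k B) i = (if Nat.eqb i k then / 2 else 1) * width B i.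
Proof.
  unfold width, bad_half, upper_half, lower_half, midpoint. intros Hw.
  destruct excluded_middle_informative; simpl; destruct (Nat.eqb_spec i k) as [->|Hik];
    rewrite ?upd_same, ?upd_other by auto; lra.
Qed.

Fixpoint bisect_coords (k : nat) (B : cell) : cell :=
  match k with O => B | S k' => bad_half k' (bisect_coords k' B) end.

Lemma bisect_coords_spec k B i : 0 <= width B i ->
  fst B i <= fst (bisect_coords k B) i /\ snd (bisect_coords k B) i <= snd B i /\
  width (bisect_coords k B) i = (if Nat.ltb i k then / 2 else 1) * width B i.
Proof.
  intros Hw. induction k as [|k [IH1 [IH2 IH3]]]; simpl; [lra|].
  assert (Hw' : 0 <= width (bisect_coords k B) i)
    by (rewrite IH3; destruct (Nat.ltb i k); lra).
  destruct (bad_half_spec k (bisect_coords k B) i Hw') as [A1 [A2 A3]].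
  rewrite A3, IH3. split; [lra | split; [lra|]].
  destruct (Nat.eqb_spec i k) as [->|Hik].
  - rewrite Nat.ltb_irrefl, (proj2 (Nat.ltb_lt k (S k))) by lia. lra.
  - destruct (Nat.ltb_spec i k), (Nat.ltb_spec i (S k)); try lia; lra.
Qed.

Lemma bisect_coords_bad k B : ~ unif_cont_on B -> ~ unif_cont_on (bisect_coords k B).
Proof. intros H. induction k as [|k IH]; simpl; auto. now apply bad_half_bad. Qed.

Fixpoint bisect (j : nat) (B : cell) : cell :=
  match j with O => B | S j' => bisect_coords m (bisect j' B) end.

Lemma bisect_bad j B : ~ unif_cont_on B -> ~ unif_cont_on (bisect j B).
Proof. intros H. induction j as [|j IH]; simpl; auto. now apply bisect_coords_bad. Qed.

Lemma bisect_spec j B i : (i < m)%nat -> 0 <= width B i ->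
  width (bisect j B) i = width B i * (/ 2) ^ j /\
  fst (bisect j B) i <= fst (bisect (S j) B) i /\ snd (bisect (S j) B) i <= snd (bisect j B) i.
Proof.
  intros Hi Hw. induction j as [|j [IH _]].
  - simpl. destruct (bisect_coords_spec m B i Hw) as [A1 [A2 _]]. split; [ring | lra].
  - assert (Hw' : forall j', 0 <= width B i * (/ 2) ^ j')
      by (intros; apply Rmult_le_pos; [lra | apply pow_le; lra]).
    assert (Hl : Nat.ltb i m = true) by now apply Nat.ltb_lt.
    destruct (bisect_coords_spec m (bisect j B) i) as [_ [_ W]]; [rewrite IH; apply Hw'|].
    simpl in W |- *. rewrite Hl in W.
    assert (Hw1 : 0 <= width (bisect (S j) B) i) by (simpl; rewrite W, IH; specialize (Hw' j); lra).
    destruct (bisect_coords_spec m (bisect (S j) B) i Hw1) as [A1 [A2 _]].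
    split; [rewrite W, IH; ring | auto].
Qed.

Lemma bisect_lower_le_upper j j' B i : (i < m)%nat -> 0 <= width B i ->
  fst (bisect j B) i <= snd (bisect j' B) i.
Proof.
  intros Hi Hw.
  assert (Mono : forall a b, (a <= b)%nat ->
            fst (bisect a B) i <= fst (bisect b B) i /\ snd (bisect b B) i <= snd (bisect a B) i).
  { intros a b Hab. induction Hab; [lra|].
    destruct (bisect_spec m0 B i Hi Hw) as [_ [A1 A2]]. lra. }
  destruct (Mono j (max j j') ltac:(lia)) as [A _].
  destruct (Mono j' (max j j') ltac:(lia)) as [_ C].
  destruct (bisect_spec (max j j') B i Hi Hw) as [W _]. unfold width in W.
  assert (0 <= (snd B i - fst B i) * (/ 2) ^ max j j')
    by (apply Rmult_le_pos; [exact Hw | apply pow_le; lra]).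
  lra.
Qed.

(* The nested bad cells shrink to a point [c]; continuity at [c] makes the small
   cells around it good, a contradiction. *)
Lemma unif_cont_on_cell B :
  0 < eps -> (forall p, pt m p -> cont_at m f p) -> (forall i, 0 <= width B i) -> unif_cont_on B.
Proof.
  intros He Hc Hw. apply NNPP. intros Hbad.
  assert (Hlim : forall i,
            {c | (i < m)%nat -> forall j, fst (bisect j B) i <= c <= snd (bisect j B) i}).
  { intros i. destruct (lt_dec i m) as [Hi|Hi]; [|exists 0; lia].
    destruct (completeness (fun x => exists j, x = fst (bisect j B) i)) as [c [U L]].
    - exists (snd (bisect O B) i). intros x [j ->]. now apply bisect_lower_le_upper.
    - exists (fst (bisect O B) i), O. reflexivity.
    - exists c. intros _ j. split; [apply U; now exists j|].
      apply L. intros x [j' ->]. now apply bisect_lower_le_upper. }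
  set (c := fun i => if lt_dec i m then proj1_sig (Hlim i) else 0).
  assert (Hcell : forall i, (i < m)%nat ->
            forall j, fst (bisect j B) i <= c i <= snd (bisect j B) i).
  { intros i Hi j. unfold c. destruct (lt_dec i m); [|lia]. now apply (proj2_sig (Hlim i)). }
  assert (ptc : pt m c) by (intros i Hi; unfold c; destruct (lt_dec i m); [lia | auto]).
  destruct (Hc c ptc (eps / 2) ltac:(lra)) as [eta [Heta Hn]].
  set (W := fsum m (width B) + 1).
  assert (HW : forall i, (i < m)%nat -> width B i < W).
  { intros i Hi. unfold W. generalize (fsum_term_le m (width B) i (fun i _ => Hw i) Hi). lra. }
  assert (HW0 : 0 < W) by (unfold W; generalize (fsum_ge0 m (width B) (fun i _ => Hw i)); lra).
  destruct (pow_lt_1_zero (/ 2) ltac:(rewrite Rabs_right; lra) (eta / 2 / W)) as [J HJ].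
  { apply Rdiv_lt_0_compat; lra. }
  specialize (HJ J (le_n J)). rewrite Rabs_right in HJ by (apply Rle_ge, pow_le; lra).
  apply (bisect_bad J B Hbad). exists (eta / 2). split; [lra|].
  intros p q Hp Hq Hb Hd.
  assert (Hpc : close m (eta / 2) c p).
  { intros i Hi. destruct (bisect_spec J B i Hi (Hw i)) as [Wd _].
    specialize (Hb i Hi). specialize (Hcell i Hi J). specialize (HW i Hi). unfold width in Wd at 1.
    assert (width B i * (/ 2) ^ J <= W * (/ 2) ^ J)
      by (apply Rmult_le_compat_r; [apply pow_le|]; lra).
    assert (W * (/ 2) ^ J < eta / 2).
    { apply (Rmult_lt_compat_l W) in HJ; [|lra].
      replace (W * (eta / 2 / W)) with (eta / 2) in HJ by (field; lra). lra. }
    apply Rabs_def1; lra. }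
  assert (A1 : Rabs (f p - f c) < eps / 2)
    by (apply Hn; auto; intros i Hi; specialize (Hpc i Hi); lra).
  assert (A2 : Rabs (f q - f c) < eps / 2).
  { apply Hn; auto. intros i Hi. specialize (Hd i Hi). specialize (Hpc i Hi).
    replace (q i - c i) with ((q i - p i) + (p i - c i)) by ring.
    eapply Rle_lt_trans; [apply Rabs_triang | lra]. }
  replace (f q - f p) with ((f q - f c) + - (f p - f c)) by ring.
  eapply Rle_lt_trans; [apply Rabs_triang|]. rewrite Rabs_Ropp. lra.
Qed.

End UniformContinuity.

Lemma unif_cont_of_compact_support m f L :
  (forall p, pt m p -> cont_at m f p) -> (forall p, pt m p -> f p <> 0 -> in_box m L p) ->
  forall eps, 0 < eps -> exists del, 0 < del /\
    forall p q, pt m p -> pt m q -> close m del p q -> Rabs (f q - f p) < eps.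
Proof.
  intros Hc Hs eps He.
  set (B := ((fun _ => - Rabs L), (fun _ => Rabs L)) : cell).
  destruct (unif_cont_on_cell m f eps B He Hc) as [del [Hd G]].
  { intros i. unfold width; simpl. generalize (Rabs_pos L); lra. }
  exists del. split; auto. intros p q Hp Hq Hpq.
  assert (HB : forall r, pt m r -> f r <> 0 -> in_cell m B r).
  { intros r Hr Hne i Hi. simpl. specialize (Hs r Hr Hne i Hi).
    generalize (Rle_abs L). apply Rabs_le_between in Hs. lra. }
  destruct (Req_dec (f p) 0) as [E|E]; [destruct (Req_dec (f q) 0) as [E'|E'] |].
  - now rewrite E, E', Rminus_diag, Rabs_R0.
  - rewrite <- Rabs_Ropp, Ropp_minus_distr. apply G; auto.
    intros i Hi. rewrite <- Rabs_Ropp, Ropp_minus_distr. auto.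
  - apply G; auto.
Qed.

(** * The Hardy potential u^2 / (2 S) *)

Lemma derivable_pt_lim_locally_zero f y del :
  0 < del -> (forall h, Rabs h < del -> f (y + h) = 0) -> derivable_pt_lim f y 0.
Proof.
  intros Hd H eps He. exists (mkposreal del Hd). intros h Hh0 Hh. simpl in Hh.
  assert (Hy : f y = 0) by (rewrite <- (Rplus_0_r y); apply H; rewrite Rabs_R0; lra).
  rewrite H, Hy by auto. unfold Rdiv. now rewrite Rminus_diag, Rmult_0_l, Rminus_diag, Rabs_R0.
Qed.

Lemma derivable_pt_lim_affine a b y : derivable_pt_lim (fun s => a + b * s) y b.
Proof.
  assert (H := derivable_pt_lim_plus (fct_cte a) (mult_real_fct b id) y 0 (b * 1)
                 (derivable_pt_lim_const a y)
                 (derivable_pt_lim_scal id b y 1 (derivable_pt_lim_id y))).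
  rewrite Rplus_0_l, Rmult_1_r in H. exact H.
Qed.

Lemma is_partial_upd m f k df p c :
  (k < m)%nat -> pt m p -> is_partial m f k df ->
  derivable_pt_lim (fun s => f (upd p k s)) c (df (upd p k c)).
Proof.
  intros Hk Hp H. assert (D := H (upd p k c) (pt_upd m p k c Hp Hk)).
  rewrite upd_same in D.
  replace (fun s => f (upd p k s)) with (fun s => f (upd (upd p k c) k s)); auto.
  apply functional_extensionality; intros s. now rewrite upd_upd.
Qed.

Section HardyPotential.
Variables (m : nat) (nu : nat -> R) (d delta : R) (u : (nat -> R) -> R).
Variable Du : nat -> (nat -> R) -> R.
Hypothesis Hnu : forall i, (i < m)%nat -> Rabs (nu i) <= 1.
Hypothesis Hdelta : 0 < delta.
Hypothesis Hsep : forall p, pt m p -> u p <> 0 -> inner m p nu >= d + delta.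

Definition plane_dist (p : nat -> R) : R := inner m p nu - d.

Definition hardy_potential (p : nat -> R) : R := u p * u p / (2 * plane_dist p).

Definition hardy_potential_partial (k : nat) (p : nat -> R) : R :=
  u p * Du k p / plane_dist p - u p * u p * nu k / (2 * (plane_dist p * plane_dist p)).

Lemma hardy_potential_vanishes p : u p = 0 -> hardy_potential p = 0.
Proof. intros E. unfold hardy_potential. rewrite E. unfold Rdiv. ring. Qed.

Lemma hardy_potential_partial_vanishes k p : u p = 0 -> hardy_potential_partial k p = 0.
Proof. intros E. unfold hardy_potential_partial. rewrite E. unfold Rdiv. ring. Qed.

Lemma plane_dist_lipschitz p q :
  Rabs (plane_dist q - plane_dist p) <= fsum m (fun i => Rabs (q i - p i)).
Proof.
  unfold plane_dist, inner.
  replace (fsum m (fun i => q i * nu i) - d - (fsum m (fun i => p i * nu i) - d))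
    with (fsum m (fun i => (q i - p i) * nu i))
    by (rewrite (fsum_ext m _ (fun i => q i * nu i - p i * nu i)), fsum_minus
          by (intros; ring); ring).
  eapply Rle_trans; [apply fsum_abs|]. apply fsum_le. intros i Hi. rewrite Rabs_mult.
  specialize (Hnu i Hi). assert (0 <= Rabs (q i - p i)) by apply Rabs_pos. nra.
Qed.

Lemma cont_at_plane_dist p : cont_at m plane_dist p.
Proof.
  intros eps He. eapply near_impl; [|apply (near_sum_abs_lt m p eps He)].
  intros q _ A. generalize (plane_dist_lipschitz p q). lra.
Qed.

Lemma u_vanishes_near_boundary p : pt m p -> plane_dist p <= 0 -> near m p (fun q => u q = 0).
Proof.
  intros Hp Hle. eapply near_impl; [|apply (near_sum_abs_lt m p delta Hdelta)].
  intros q Hq A. destruct (Req_dec (u q) 0) as [E|E]; auto. exfalso.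
  generalize (Hsep q Hq E) (plane_dist_lipschitz p q). unfold plane_dist in *.
  intros B C. apply Rabs_le_between in C. lra.
Qed.

Lemma cont_at_hardy_potential_partial k p :
  (forall p, pt m p -> cont_at m u p) -> (forall p, pt m p -> cont_at m (Du k) p) ->
  pt m p -> cont_at m (hardy_potential_partial k) p.
Proof.
  intros Hu HDu Hp. destruct (Rlt_dec 0 (plane_dist p)) as [Sp|Sp].
  - assert (HS := cont_at_plane_dist p). unfold hardy_potential_partial, Rdiv.
    apply cont_at_minus; apply cont_at_mult;
      [| apply cont_at_inv | | apply cont_at_inv]; try (apply Rgt_not_eq; nra);
      repeat apply cont_at_mult; auto using cont_at_const.
  - destruct (u_vanishes_near_boundary p Hp ltac:(lra)) as [del [Hd Hn]].
    intros eps He. exists del. split; auto. intros q Hq Hpq.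
    rewrite !hardy_potential_partial_vanishes, Rminus_diag, Rabs_R0; auto.
    apply Hn; auto. intros i Hi. rewrite Rminus_diag, Rabs_R0. auto.
Qed.

Lemma derivable_pt_lim_half_ratio U S y lu ls :
  derivable_pt_lim U y lu -> derivable_pt_lim S y ls -> S y <> 0 ->
  derivable_pt_lim (fun z => U z * U z / (2 * S z)) y
    (U y * lu / S y - U y * U y * ls / (2 * (S y * S y))).
Proof.
  intros HU HS Hne.
  assert (H := derivable_pt_lim_div (mult_fct U U) (mult_real_fct 2 S) y _ _
                 (derivable_pt_lim_mult U U y lu lu HU HU) (derivable_pt_lim_scal S 2 y ls HS)).
  unfold div_fct, mult_fct, mult_real_fct, Rsqr in H.
  replace (U y * lu / S y - U y * U y * ls / (2 * (S y * S y)))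
    with (((lu * U y + U y * lu) * (2 * S y) - 2 * ls * (U y * U y)) / ((2 * S y) * (2 * S y)))
    by (field; auto).
  apply H. apply Rmult_integral_contrapositive. split; lra.
Qed.

Lemma hardy_potential_is_partial k :
  (k < m)%nat -> is_partial m u k (Du k) ->
  is_partial m hardy_potential k (hardy_potential_partial k).
Proof.
  intros Hk HP p Hp.
  destruct (Rlt_dec 0 (plane_dist p)) as [Sp|Sp].
  - assert (HS : derivable_pt_lim (fun s => plane_dist (upd p k s)) (p k) (nu k)).
    { replace (fun s => plane_dist (upd p k s))
        with (fun s => (plane_dist p - p k * nu k) + nu k * s)
        by (apply functional_extensionality; intros s; unfold plane_dist;
            rewrite inner_upd by auto; ring).
      apply derivable_pt_lim_affine. }
    assert (H := derivable_pt_lim_half_ratio (fun s => u (upd p k s))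
                   (fun s => plane_dist (upd p k s)) (p k) _ _ (HP p Hp) HS).
    cbv beta in H. rewrite !upd_id in H. apply H. lra.
  - destruct (u_vanishes_near_boundary p Hp ltac:(lra)) as [del [Hd Hn]].
    rewrite hardy_potential_partial_vanishes
      by (apply Hn; auto; intros i _; rewrite Rminus_diag, Rabs_R0; auto).
    apply (derivable_pt_lim_locally_zero _ _ del Hd). intros h Hh.
    apply hardy_potential_vanishes, Hn; [now apply pt_upd|].
    intros i Hi. destruct (Nat.eq_dec i k) as [->|Hik].
    + now rewrite upd_same, Rplus_minus_l.
    + rewrite upd_other, Rminus_diag, Rabs_R0 by auto. auto.
Qed.

End HardyPotential.

(** * Discrete integration by parts *)

Section DiscreteIntegrationByParts.
Variables (m k : nat) (G g b : (nat -> R) -> R) (K Bb : R).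
Hypothesis Hk : (k < m)%nat.
Hypothesis HK : 0 <= K.
Hypothesis HBb : 0 <= Bb.
Hypothesis HG_supp : forall p, pt m p -> G p <> 0 -> in_box m K p.
Hypothesis Hg_supp : forall p, pt m p -> g p <> 0 -> in_box m K p.
Hypothesis HGg : is_partial m G k g.
Hypothesis Hg_cont : forall p, pt m p -> cont_at m g p.
Hypothesis Hb_inv : forall p x, b (upd p k x) = b p.
Hypothesis Hb_bound : forall p, pt m p -> in_box m (K + 1) p -> Rabs (b p) <= Bb.

Definition discrete_error (N : nat) (p : nat -> R) : R :=
  b p * g p - INR N * (b p * G (upd p k (p k + / INR N)) - b p * G p).

Lemma riemann_sum_discrete_error N :
  (0 < N)%nat -> K < INR N ->
  riemann_sum m N (fun p => b p * g p) = riemann_sum m N (discrete_error N).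
Proof.
  intros HN HKN. unfold riemann_sum. f_equal. unfold discrete_error.
  rewrite gridsum_minus, gridsum_scal, gridsum_minus.
  assert (Hshift : gridsum m N (fun p => b p * G (upd p k (p k + / INR N))) =
                   gridsum m N (fun p => b p * G p)).
  { rewrite <- (gridsum_shift_invariant N HN m K (fun p => b p * G p) k); auto.
    - apply gridsum_ext; intros. now rewrite Hb_inv.
    - intros p Hp Hpk. destruct (Req_dec (G p) 0) as [E|E]; [rewrite E; ring|].
      specialize (HG_supp p Hp E k Hk). lra. }
  rewrite Hshift. ring.
Qed.

Lemma discrete_error_supp N p :
  1 <= INR N -> pt m p -> discrete_error N p <> 0 -> in_box m (K + 1) p.
Proof.
  intros HN Hp Hne i Hi.
  assert (Hh : 0 < / INR N <= 1)
    by (split; [apply Rinv_0_lt_compat; lra | rewrite <- Rinv_1; apply Rinv_le_contravar; lra]).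
  destruct (Req_dec (g p) 0) as [Eg|Eg]; [destruct (Req_dec (G p) 0) as [EG|EG] |].
  - destruct (Req_dec (G (upd p k (p k + / INR N))) 0) as [EG'|EG'].
    + exfalso. apply Hne. unfold discrete_error. rewrite Eg, EG, EG'. ring.
    + specialize (HG_supp _ (pt_upd m p k _ Hp Hk) EG' i Hi).
      destruct (Nat.eq_dec i k) as [->|Hik].
      * rewrite upd_same in HG_supp. apply Rabs_le_between in HG_supp. apply Rabs_le. lra.
      * rewrite upd_other in HG_supp by auto. lra.
  - specialize (HG_supp p Hp EG i Hi). lra.
  - specialize (Hg_supp p Hp Eg i Hi). lra.
Qed.

(* By the mean value theorem the difference quotient is a value of [g] within
   one mesh step of [p]. *)
Lemma discrete_error_bound N eps del :
  1 <= INR N -> / INR N < del -> 0 < eps ->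
  (forall p q, pt m p -> pt m q -> close m del p q -> Rabs (g q - g p) < eps) ->
  forall p, pt m p -> Rabs (discrete_error N p) <= Bb * eps.
Proof.
  intros HN Hdel Heps Hunif p Hp.
  destruct (Req_dec (discrete_error N p) 0) as [E|E].
  { rewrite E, Rabs_R0. apply Rmult_le_pos; lra. }
  assert (Hbox := discrete_error_supp N p HN Hp E).
  set (h := / INR N) in *. assert (Hh : 0 < h) by (apply Rinv_0_lt_compat; lra).
  destruct (MVT_cor2 (fun y => G (upd p k y)) (fun y => g (upd p k y)) (p k) (p k + h))
    as [xi [Exi Hxi]]; [lra | intros c _; now apply (is_partial_upd m) |].
  rewrite upd_id in Exi. replace (p k + h - p k) with h in Exi by ring.
  replace (discrete_error N p) with (b p * - (g (upd p k xi) - g p)).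
  2:{ unfold discrete_error. fold h.
      replace (b p * G (upd p k (p k + h)) - b p * G p) with (b p * (G (upd p k (p k + h)) - G p))
        by ring.
      rewrite Exi. unfold h. field. lra. }
  rewrite Rabs_mult, Rabs_Ropp. apply Rmult_le_compat; try apply Rabs_pos; auto.
  left. apply Hunif; [auto | now apply pt_upd |].
  intros i Hi. destruct (Nat.eq_dec i k) as [->|Hik].
  - rewrite upd_same, Rabs_right; lra.
  - rewrite upd_other, Rminus_diag, Rabs_R0 by auto. lra.
Qed.

Lemma riemann_sum_partial_vanishes : Un_cv (fun N => riemann_sum m N (fun p => b p * g p)) 0.
Proof.
  intros eps He. set (C := Bb * (2 * (K + 1) + 1) ^ m).
  assert (HC : 0 <= C) by (apply Rmult_le_pos; auto; apply pow_le; lra).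
  set (eps' := eps / (C + 1)). assert (He' : 0 < eps') by (apply Rdiv_lt_0_compat; lra).
  destruct (unif_cont_of_compact_support m g K Hg_cont Hg_supp eps' He') as [del [Hdel Hunif]].
  assert (0 < / del) by (apply Rinv_0_lt_compat; auto).
  destruct (INR_unbounded (K + 1 + / del)) as [N0 HN0].
  exists N0. intros N HN. assert (HNN : INR N0 <= INR N) by (apply le_INR; lia).
  assert (Npos : (0 < N)%nat) by (destruct N; [simpl in HNN; lra | lia]).
  assert (Hstep : / INR N < del).
  { rewrite <- (Rinv_inv del). apply Rinv_lt_contravar; [apply Rmult_lt_0_compat|]; lra. }
  unfold R_dist. rewrite Rminus_0_r, riemann_sum_discrete_error by (auto; lra).
  eapply Rle_lt_trans.
  - apply (riemann_sum_support_bound N Npos m (K + 1) _ (Bb * eps')); try lra.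
    + apply Rmult_le_pos; lra.
    + apply (discrete_error_bound N eps' del); lra || auto.
    + intros p Hp Hne. apply (discrete_error_supp N); auto. lra.
  - replace (Bb * eps' * (2 * (K + 1) + 1) ^ m) with (eps * (C / (C + 1)))
      by (unfold eps', C; field; apply Rgt_not_eq; fold C; lra).
    assert (C / (C + 1) < 1)
      by (apply (Rmult_lt_reg_r (C + 1)); [lra|]; unfold Rdiv; rewrite Rmult_assoc, Rinv_l; lra).
    nra.
Qed.

End DiscreteIntegrationByParts.

Lemma Un_cv_const c : Un_cv (fun _ => c) c.
Proof. intros eps He. exists O. intros. unfold R_dist. now rewrite Rminus_diag, Rabs_R0. Qed.

Lemma Un_cv_fsum K (s : nat -> nat -> R) l :
  (forall k, (k < K)%nat -> Un_cv (s k) (l k)) ->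
  Un_cv (fun N => fsum K (fun k => s k N)) (fsum K l).
Proof.
  induction K as [|K IH]; intros H; simpl; [apply Un_cv_const|].
  apply CV_plus; [apply IH; intros; apply H | apply H]; lia.
Qed.

Lemma Un_cv_le_eventually a b la lb N0 :
  Un_cv a la -> Un_cv b lb -> (forall N, (N0 <= N)%nat -> a N <= b N) -> la <= lb.
Proof.
  intros Ha Hb H.
  apply (Rle_cv_lim (Un := fun N => a (N + N0)%nat) (Vn := fun N => b (N + N0)%nat));
    [| now apply CV_shift' ..].
  intros. apply H. lia.
Qed.

(** * The horizontal gradient along nu *)

Lemma fsum_2n1 n f :
  fsum (2 * n + 1) f = fsum n f + fsum n (fun i => f (n + i)%nat) + f (2 * n)%nat.
Proof.
  replace (2 * n + 1)%nat with (S (n + n)) by lia. simpl fsum.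
  rewrite fsum_add. now replace (n + n)%nat with (2 * n)%nat by lia.
Qed.

Lemma cauchy_schwarz_pairs n (al be X Y : nat -> R) :
  fsum n (fun i => al i ^ 2 + be i ^ 2) = 1 ->
  fsum n (fun i => al i * X i + be i * Y i) ^ 2 <= fsum n (fun i => X i ^ 2 + Y i ^ 2).
Proof.
  intros H. set (t := fsum n (fun i => al i * X i + be i * Y i)).
  assert (P : 0 <= fsum n (fun i => (X i - t * al i) ^ 2 + (Y i - t * be i) ^ 2))
    by (apply fsum_ge0; intros; apply Rplus_le_le_0_compat; apply pow2_ge_0).
  rewrite (fsum_ext n _ (fun i => (X i ^ 2 + Y i ^ 2) - (2 * t) * (al i * X i + be i * Y i)
                                  + (t * t) * (al i ^ 2 + be i ^ 2))) in P by (intros; ring).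
  rewrite fsum_plus, fsum_minus, !fsum_scal, H in P. fold t in P. nra.
Qed.

Lemma cauchy_schwarz_unit m (a v : nat -> R) :
  fsum m (fun i => v i ^ 2) = 1 -> fsum m (fun i => a i * v i) <= sqrt (fsum m (fun i => a i ^ 2)).
Proof.
  intros H. set (t := fsum m (fun i => a i * v i)).
  assert (P : 0 <= fsum m (fun i => (a i - t * v i) ^ 2))
    by (apply fsum_ge0; intros; apply pow2_ge_0).
  rewrite (fsum_ext m _ (fun i => a i ^ 2 - (2 * t) * (a i * v i) + (t * t) * v i ^ 2)) in P
    by (intros; ring).
  rewrite fsum_plus, fsum_minus, !fsum_scal, H in P. fold t in P.
  eapply Rle_trans; [apply Rle_abs|]. rewrite <- sqrt_Rsqr_abs.
  apply sqrt_le_1_alt. unfold Rsqr. nra.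
Qed.

Lemma plane_dist_le_inf m nu d p r :
  fsum m (fun i => nu i ^ 2) = 1 ->
  is_inf (fun r => exists q, pt m q /\ inner m q nu = d /\ r = eucl_dist m p q) r ->
  plane_dist m nu d p <= r.
Proof.
  intros Hnu [_ Hinf]. apply Hinf. intros x [q [_ [Hq ->]]].
  unfold plane_dist, eucl_dist. rewrite <- Hq. unfold inner. rewrite <- fsum_minus.
  rewrite (fsum_ext m _ (fun i => (p i - q i) * nu i)) by (intros; ring).
  now apply cauchy_schwarz_unit.
Qed.

Section Heisenberg.
Variables (n : nat) (nu : nat -> R).

Definition symplectic_pairing (p : nat -> R) : R :=
  fsum n (fun i => nu i * p (n + i)%nat - nu (n + i)%nat * p i).

Definition horizontal_coeff (k : nat) (p : nat -> R) : R :=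
  if Nat.eqb k (2 * n) then 2 * symplectic_pairing p else nu k.

Lemma horizontal_coeff_upd k p x :
  (k < 2 * n + 1)%nat -> horizontal_coeff k (upd p k x) = horizontal_coeff k p.
Proof.
  intros Hk. unfold horizontal_coeff. destruct (Nat.eqb_spec k (2 * n)) as [->|]; auto.
  f_equal. unfold symplectic_pairing. apply fsum_ext. intros i Hi. now rewrite !upd_other by lia.
Qed.

Lemma horizontal_coeff_bound L k p :
  0 <= L -> (forall i, (i < 2 * n + 1)%nat -> Rabs (nu i) <= 1) ->
  (k < 2 * n + 1)%nat -> in_box (2 * n + 1) L p ->
  Rabs (horizontal_coeff k p) <= 1 + 2 * (INR n * (2 * L)).
Proof.
  intros HL Hnu Hk Hp. assert (0 <= INR n) by apply pos_INR. unfold horizontal_coeff.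
  destruct (Nat.eqb_spec k (2 * n)).
  - rewrite Rabs_mult, (Rabs_right 2) by lra. unfold symplectic_pairing.
    enough (Rabs (fsum n (fun i => nu i * p (n + i)%nat - nu (n + i)%nat * p i)) <= INR n * (2 * L))
      by lra.
    eapply Rle_trans; [apply fsum_abs|]. apply fsum_le_const. intros i Hi.
    unfold Rminus. eapply Rle_trans; [apply Rabs_triang|]. rewrite Rabs_Ropp, !Rabs_mult.
    assert (A1 := Hnu i ltac:(lia)). assert (A2 := Hnu (n + i)%nat ltac:(lia)).
    assert (B1 := Hp i ltac:(lia)). assert (B2 := Hp (n + i)%nat ltac:(lia)).
    generalize (Rabs_pos (nu i)) (Rabs_pos (nu (n + i)%nat))
      (Rabs_pos (p i)) (Rabs_pos (p (n + i)%nat)).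
    nra.
  - specialize (Hnu k Hk). nra.
Qed.

Hypothesis Hnu_t : nu (2 * n)%nat = 0.

Lemma horizontal_coeff_normal p :
  fsum (2 * n + 1) (fun k => horizontal_coeff k p * nu k) = fsum (2 * n + 1) (fun i => nu i ^ 2).
Proof.
  apply fsum_ext. intros k Hk. unfold horizontal_coeff.
  destruct (Nat.eqb_spec k (2 * n)) as [->|]; [rewrite Hnu_t|]; ring.
Qed.

Lemma horizontal_coeff_derivative Du p :
  fsum (2 * n + 1) (fun k => horizontal_coeff k p * Du k p) =
  fsum n (fun i => nu i * Xfield n Du i p + nu (n + i)%nat * Yfield n Du i p).
Proof.
  rewrite fsum_2n1. unfold horizontal_coeff at 3. rewrite Nat.eqb_refl.
  rewrite (fsum_ext n (fun i => horizontal_coeff i p * Du i p) (fun i => nu i * Du i p))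
    by (intros i Hi; unfold horizontal_coeff; destruct (Nat.eqb_spec i (2 * n)); [lia | auto]).
  rewrite (fsum_ext n (fun i => horizontal_coeff (n + i) p * Du (n + i)%nat p)
                      (fun i => nu (n + i)%nat * Du (n + i)%nat p))
    by (intros i Hi; unfold horizontal_coeff;
        destruct (Nat.eqb_spec (n + i) (2 * n)); [lia | auto]).
  rewrite (fsum_ext n (fun i => nu i * Xfield n Du i p + nu (n + i)%nat * Yfield n Du i p)
                      (fun i => (nu i * Du i p + nu (n + i)%nat * Du (n + i)%nat p)
                                + (2 * Du (2 * n)%nat p)
                                  * (nu i * p (n + i)%nat - nu (n + i)%nat * p i)))
    by (intros; unfold Xfield, Yfield; ring).
  rewrite !fsum_plus, fsum_scal. unfold symplectic_pairing. ring.
Qed.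

Lemma horizontal_coeff_derivative_sq_le Du p :
  fsum (2 * n + 1) (fun i => nu i ^ 2) = 1 ->
  fsum (2 * n + 1) (fun k => horizontal_coeff k p * Du k p) ^ 2 <= gradH2 n Du p.
Proof.
  intros Hnu. rewrite horizontal_coeff_derivative. apply cauchy_schwarz_pairs.
  rewrite fsum_2n1, Hnu_t, fsum_plus in *. lra.
Qed.

End Heisenberg.

Lemma Rabs_le_1_of_sum_sq m (nu : nat -> R) :
  fsum m (fun i => nu i ^ 2) = 1 -> forall i, (i < m)%nat -> Rabs (nu i) <= 1.
Proof.
  intros Hnu i Hi.
  assert (nu i ^ 2 <= 1) by (rewrite <- Hnu; apply (fsum_term_le m (fun i => nu i ^ 2)); auto;
                            intros; apply pow2_ge_0).
  unfold Rabs; destruct Rcase_abs; nra.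
Qed.

Lemma cont_at_partial_of_smooth m u k Du :
  smooth m u -> (k < m)%nat -> is_partial m u k Du -> forall p, pt m p -> cont_at m Du p.
Proof.
  intros [_ Hder] Hk HDu p Hp. destruct (Hder k Hk) as [df [Hdf [Hcdf _]]].
  apply (cont_at_ext m df); auto; [|exact (Hcdf p Hp)].
  intros q Hq. exact (uniqueness_limite _ _ _ _ (Hdf q Hq) (HDu q Hq)).
Qed.

Section HardyInequality.
Variables (n : nat) (nu : nat -> R) (d delta K : R) (u : (nat -> R) -> R).
Variable Du : nat -> (nat -> R) -> R.
Let m := (2 * n + 1)%nat.
Hypothesis Hnu : fsum m (fun i => nu i ^ 2) = 1.
Hypothesis Hnu_t : nu (2 * n)%nat = 0.
Hypothesis Hdelta : 0 < delta.
Hypothesis HK : 0 <= K.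
Hypothesis Hbox : forall p, pt m p -> u p <> 0 -> in_box m K p.
Hypothesis Hsep : forall p, pt m p -> u p <> 0 -> inner m p nu >= d + delta.
Hypothesis Hu_cont : forall p, pt m p -> cont_at m u p.
Hypothesis Hpart : forall k, (k < m)%nat -> is_partial m u k (Du k).
Hypothesis HDu_cont : forall k, (k < m)%nat -> forall p, pt m p -> cont_at m (Du k) p.

(* Completing the square: [(a.grad u)^2 >= a.grad G + u^2 / (4 S^2)], since [a.nu = 1]. *)
Lemma hardy_pointwise w p :
  pt m p ->
  (0 < plane_dist m nu d p ->
     is_inf (fun r => exists q, pt m q /\ inner m q nu = d /\ r = eucl_dist m p q) (w p)) ->
  fsum m (fun k => horizontal_coeff n nu k p * hardy_potential_partial m nu d u Du k p)
    + / 4 * (u p ^ 2 / w p ^ 2) <= gradH2 n Du p.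
Proof.
  intros Hp Hw.
  set (A := fsum m (fun k => horizontal_coeff n nu k p * Du k p)).
  assert (HA : A ^ 2 <= gradH2 n Du p) by now apply horizontal_coeff_derivative_sq_le.
  set (S := plane_dist m nu d p).
  assert (Hanu : fsum m (fun k => horizontal_coeff n nu k p * nu k) = 1)
    by (rewrite <- Hnu; apply horizontal_coeff_normal, Hnu_t).
  assert (Hsum : fsum m (fun k => horizontal_coeff n nu k p
                                  * hardy_potential_partial m nu d u Du k p)
                 = u p / S * A - u p * u p / (2 * (S * S))).
  { replace (u p * u p / (2 * (S * S)))
      with (u p * u p / (2 * (S * S)) * fsum m (fun k => horizontal_coeff n nu k p * nu k))
      by (rewrite Hanu; ring).
    unfold A. rewrite <- (fsum_scal m (u p / S)), <- (fsum_scal m (u p * u p / (2 * (S * S)))).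
    rewrite <- fsum_minus. apply fsum_ext; intros.
    unfold hardy_potential_partial. fold S. unfold Rdiv. ring. }
  rewrite Hsum. destruct (Req_dec (u p) 0) as [E|E].
  { rewrite E. unfold Rdiv. generalize (pow2_ge_0 A). intros. ring_simplify. lra. }
  assert (HS : 0 < S) by (generalize (Hsep p Hp E); unfold S, plane_dist; lra).
  assert (HSw : S <= w p) by (apply (plane_dist_le_inf m nu d p); auto).
  assert (u p ^ 2 / w p ^ 2 <= u p ^ 2 / S ^ 2).
  { unfold Rdiv. apply Rmult_le_compat_l; [apply pow2_ge_0|].
    apply Rinv_le_contravar; [apply pow_lt; lra | apply pow_incr; lra]. }
  assert (u p / S * A - u p * u p / (2 * (S * S)) + / 4 * (u p ^ 2 / S ^ 2)
          = A ^ 2 - (A - u p / (2 * S)) ^ 2) by (field; lra).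
  generalize (pow2_ge_0 (A - u p / (2 * S))). lra.
Qed.

Lemma riemann_sum_horizontal_hardy_vanishes :
  Un_cv (fun N => fsum m (fun k => riemann_sum m N
           (fun p => horizontal_coeff n nu k p * hardy_potential_partial m nu d u Du k p))) 0.
Proof.
  assert (Hnu_le : forall i, (i < m)%nat -> Rabs (nu i) <= 1) by now apply Rabs_le_1_of_sum_sq.
  replace 0 with (fsum m (fun _ => 0)) by (clear; induction m; simpl; lra).
  apply Un_cv_fsum. intros k Hk.
  apply (riemann_sum_partial_vanishes m k (hardy_potential m nu d u) _ _ K
           (1 + 2 * (INR n * (2 * (K + 1))))); auto.
  - generalize (pos_INR n). nra.
  - intros p Hp E. apply Hbox; auto. intros Eu. apply E, hardy_potential_vanishes, Eu.
  - intros p Hp E. apply Hbox; auto. intros Eu. apply E, hardy_potential_partial_vanishes, Eu.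
  - exact (hardy_potential_is_partial m nu d delta u Du Hnu_le Hdelta Hsep k Hk (Hpart k Hk)).
  - intros p Hp.
    exact (cont_at_hardy_potential_partial m nu d delta u Du Hnu_le Hdelta Hsep k p
             Hu_cont (HDu_cont k Hk) Hp).
  - intros p x. now apply horizontal_coeff_upd.
  - intros p _ Hp. apply horizontal_coeff_bound; auto. lra.
Qed.

End HardyInequality.

Theorem mainTheorem3 (n : nat) (nu : nat -> R) (d : R)
  (u : (nat -> R) -> R) (Du : nat -> (nat -> R) -> R) (w : (nat -> R) -> R)
  (I1 I2 : R) :
  fsum (2 * n + 1) (fun i => nu i ^ 2) = 1 ->
  nu (2 * n)%nat = 0 ->
  smooth (2 * n + 1) u ->
  (exists K delta, 0 < delta /\ forall p, pt (2 * n + 1) p -> u p <> 0 ->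
      (forall i, (i < 2 * n + 1)%nat -> Rabs (p i) <= K) /\
      inner (2 * n + 1) p nu >= d + delta) ->
  (forall i, (i < 2 * n + 1)%nat -> is_partial (2 * n + 1) u i (Du i)) ->
  (forall p, pt (2 * n + 1) p -> inner (2 * n + 1) p nu > d ->
      is_inf (fun r => exists q, pt (2 * n + 1) q /\ inner (2 * n + 1) q nu = d /\
                                 r = eucl_dist (2 * n + 1) p q) (w p)) ->
  integral_is (2 * n + 1) (gradH2 n Du) I1 ->
  integral_is (2 * n + 1) (fun p => u p ^ 2 / w p ^ 2) I2 ->
  I1 >= / 4 * I2.
Proof.
  intros Hnu Hnu_t Hsmooth [K [delta [Hdelta Hsupp]]] Hpart Hw HI1 HI2.
  set (m := (2 * n + 1)%nat) in *.
  assert (Hbox : forall p, pt m p -> u p <> 0 -> in_box m (Rabs K) p).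
  { intros p Hp E i Hi. generalize (proj1 (Hsupp p Hp E) i Hi) (Rle_abs K). lra. }
  assert (Hsep : forall p, pt m p -> u p <> 0 -> inner m p nu >= d + delta)
    by (intros; now apply Hsupp).
  set (E := fun N => fsum m (fun k => riemann_sum m N
              (fun p => horizontal_coeff n nu k p * hardy_potential_partial m nu d u Du k p))).
  apply Rle_ge, (Un_cv_le_eventually
    (fun N => E N + / 4 * riemann_sum m N (fun p => u p ^ 2 / w p ^ 2))
    (fun N => riemann_sum m N (gradH2 n Du)) _ _ 1); [| exact HI1 |].
  - rewrite <- (Rplus_0_l (/ 4 * I2)). apply CV_plus; [| apply CV_mult; auto using Un_cv_const].
    apply (riemann_sum_horizontal_hardy_vanishes n nu d delta (Rabs K)); auto using Rabs_pos.
    + now destruct Hsmooth.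
    + intros k Hk. apply (cont_at_partial_of_smooth m u k); auto.
  - intros N HN. unfold E.
    rewrite <- (riemann_sum_fsum m N m), <- riemann_sum_scal, <- riemann_sum_plus.
    apply riemann_sum_le; [lia|]. intros p Hp.
    apply (hardy_pointwise n nu d delta); auto.
    intros HS. apply Hw; auto. unfold plane_dist in HS. fold m in HS. lra.
Qed.
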